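(* Let $L\ge1$ and consider a continuous-time Markov chain on $\{0,\dots,L\}$ with jump rates $q(\cdot,\cdot)$, reversible with respect to a probability measure $p$. Assume that for some $\alpha,\beta>0$: (a) $\min_{n\in\{1,\dots,L\}}\max\big(q(n,n-1),q(n-1,n)\big)\ge\alpha$; (b) for every $n\in\{0,\dots,L\}$, $\min\big(\sum_{m\le n}p(m),\ \sum_{m\ge n}p(m)\big)\le\beta\,p(n)$. Then the relaxation time (inverse spectral gap) of the chain is at most $\beta L/\alpha$. *)

From HB Require Import structures.
From mathcomp Require Import all_boot all_order all_algebra.
From mathcomp Require Import boolp classical_sets reals.
Set Implicit Arguments. Unset Strict Implicit. Unset Printing Implicit Defensive.
Import Order.TTheory GRing.Theory Num.Theory.
Local Open Scope ring_scope.
Local Open Scope classical_set_scope.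

Section Chain.
Context {R : realType} {L : nat}.
Implicit Types (p : 'I_L.+1 -> R) (q : 'I_L.+1 -> 'I_L.+1 -> R) (f : 'I_L.+1 -> R).

Definition expect p f : R := \sum_(x < L.+1) p x * f x.

Definition variance p f : R := \sum_(x < L.+1) p x * (f x - expect p f) ^+ 2.

Definition dirichlet p q f : R :=
  2^-1 * \sum_(x < L.+1) \sum_(y < L.+1) p x * q x y * (f x - f y) ^+ 2.

Definition spectral_gap p q : R :=
  inf [set r : R | exists f, variance p f != 0 /\ r = dirichlet p q f / variance p f].

Definition relaxation_time p q : R := (spectral_gap p q)^-1.

Definition is_prob p : Prop := (forall x, 0 < p x) /\ \sum_(x < L.+1) p x = 1.

Definition is_rate q : Prop := forall x y, x != y -> 0 <= q x y.

Definition reversible p q : Prop := forall x y, p x * q x y = p y * q y x.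
End Chain.

From HB Require Import structures.
From mathcomp Require Import all_boot all_order all_algebra.
From mathcomp Require Import boolp classical_sets reals.
From mathcomp Require Import ring lra.
Import Order.TTheory GRing.Theory Num.Theory.
Set Implicit Arguments. Unset Strict Implicit. Unset Printing Implicit Defensive.
Local Open Scope ring_scope.

(* Canonical paths on the segment {0, ..., L}.  Write the variance as
   Var f = 1/2 sum_{x,y} p(x) p(y) (f y - f x)^2 and telescope each difference
   along the at most L edges between x and y; Cauchy-Schwarz then gives
   Var f <= L sum_i (f(i+1) - f(i))^2 P(<= i) P(> i).  As P(<= i) + P(> i) = 1,
   the product P(<= i) P(> i) is at most min(P(<= i), P(> i)), which by (b) is
   at most beta p(i) and beta p(i+1); with (a) and reversibility this bounds
   alpha P(<= i) P(> i) by beta p(i+1) q(i+1, i), the equilibrium flow through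
   the edge {i, i+1}.  Hence alpha Var f <= beta L E(f, f). *)

Section SumInequalities.
Variable R : realFieldType.

Lemma ler_sum_subpred (I : Type) (s : seq I) (P Q : pred I) (F : I -> R) :
  (forall i, Q i -> 0 <= F i) -> (forall i, P i -> Q i) ->
  \sum_(i <- s | P i) F i <= \sum_(i <- s | Q i) F i.
Proof.
move=> F_ge0 PQ; rewrite (big_mkcond P) (big_mkcond Q) /=; apply: ler_sum => i _.
have [/[dup] /PQ -> //|_] := boolP (P i); by case: ifP => // /F_ge0.
Qed.

Lemma ler_term_sum_nat (n i : nat) (F : nat -> R) :
  (i < n)%N -> (forall k, (k < n)%N -> 0 <= F k) -> F i <= \sum_(0 <= k < n) F k.
Proof.
move=> lt_in F_ge0; rewrite big_mkord (bigD1 (Ordinal lt_in)) //= lerDl.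
by apply: sumr_ge0 => k _; exact: F_ge0.
Qed.

Lemma sqr_sum_le_size (I : Type) (s : seq I) (a : I -> R) :
  (\sum_(i <- s) a i) ^+ 2 <= (size s)%:R * \sum_(i <- s) a i ^+ 2.
Proof.
elim: s => [|x s IH]; first by rewrite !big_nil mul0r expr2 mul0r.
rewrite !big_cons /= -natr1.
set S := \sum_(i <- s) a i in IH *; set Q := \sum_(i <- s) a i ^+ 2 in IH *.
have Q_ge0 : 0 <= Q by apply: sumr_ge0 => i _; exact: sqr_ge0.
have [k0|k_gt0] := eqVneq (size s)%:R (0 : R).
  have S0 : S = 0 by apply/eqP; rewrite -sqrf_eq0 eq_le sqr_ge0 andbT -(mul0r Q) -k0.
  rewrite k0 S0; lra.
have {}k_gt0 : 0 < (size s)%:R :> R by rewrite lt_def k_gt0 ler0n.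
have := sqr_ge0 ((size s)%:R * a x - S); nra.
Qed.

Lemma sqr_subr_le_steps (f : nat -> R) (N x y : nat) : (x <= y <= N)%N ->
  (f y - f x) ^+ 2 <= N%:R * \sum_(0 <= i < N | (x <= i < y)%N) (f i.+1 - f i) ^+ 2.
Proof.
move=> /andP[le_xy le_yN].
have -> : \sum_(0 <= i < N | (x <= i < y)%N) (f i.+1 - f i) ^+ 2 =
          \sum_(x <= i < y) (f i.+1 - f i) ^+ 2.
  rewrite (big_nat_widen x y N) // (big_nat_widenl x 0) //.
  by apply: eq_bigl => i; rewrite andbC.
rewrite -(telescope_sumr _ le_xy).
apply: le_trans (sqr_sum_le_size _ _) _.
apply: ler_wpM2r; first by apply: sumr_ge0 => i _; exact: sqr_ge0.
by rewrite size_iota ler_nat (leq_trans (leq_subr _ _)).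
Qed.

Lemma sqr_subr_le_steps_sym (f : nat -> R) (N x y : nat) : (x <= N)%N -> (y <= N)%N ->
  (f x - f y) ^+ 2 <= N%:R * (\sum_(0 <= i < N | (x <= i < y)%N) (f i.+1 - f i) ^+ 2
                              + \sum_(0 <= i < N | (y <= i < x)%N) (f i.+1 - f i) ^+ 2).
Proof.
have steps_ge0 (P : pred nat) : 0 <= \sum_(0 <= i < N | P i) (f i.+1 - f i) ^+ 2.
  by apply: sumr_ge0 => i _; exact: sqr_ge0.
move=> le_xN le_yN; have [le_xy|lt_yx] := leqP x y.
  rewrite -opprB sqrrN.
  apply: le_trans (sqr_subr_le_steps (N := N) f _) _; first by rewrite le_xy.
  by rewrite ler_wpM2l // lerDl.
apply: le_trans (sqr_subr_le_steps (N := N) f _) _; first by rewrite (ltnW lt_yx).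
by rewrite ler_wpM2l // lerDr.
Qed.

Lemma sum_pairs_sqr_subr (n : nat) (p f : nat -> R) :
  \sum_(0 <= k < n) p k = 1 ->
  \sum_(0 <= x < n) \sum_(0 <= y < n) p x * p y * (f x - f y) ^+ 2 =
  2 * \sum_(0 <= x < n) p x * (f x - \sum_(0 <= k < n) p k * f k) ^+ 2.
Proof.
move=> p_sum1; set E := \sum_(0 <= k < n) p k * f k.
have centered : \sum_(0 <= x < n) p x * (f x - E) = 0.
  under eq_bigr do rewrite mulrBr.
  by rewrite sumrB -mulr_suml p_sum1 mul1r subrr.
have expand x y : p x * p y * (f x - f y) ^+ 2 =
    p x * (f x - E) ^+ 2 * p y + p x * (p y * (f y - E) ^+ 2)
    - 2 * (p x * (f x - E)) * (p y * (f y - E)) by ring.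
under eq_bigr => x _ do under eq_bigr => y _ do rewrite expand.
under eq_bigr => x _ do rewrite sumrB big_split /= -!mulr_sumr p_sum1 centered.
under eq_bigr do rewrite mulr1 mulr0 subr0.
by rewrite big_split /= -mulr_suml p_sum1 mul1r mulr2n mulrDl mul1r.
Qed.

Lemma sum_pairs_ge_adjacent (N : nat) (G : nat -> nat -> R) :
  (forall x y, (x <= N)%N -> (y <= N)%N -> 0 <= G x y) ->
  \sum_(0 <= i < N) (G i i.+1 + G i.+1 i) <=
  \sum_(0 <= x < N.+1) \sum_(0 <= y < N.+1) G x y.
Proof.
elim: N G => [|N IH] G G_ge0.
  by rewrite big_geq // !big_nat1; exact: G_ge0.
rewrite big_nat_recr //= [leRHS]big_nat_recr //=.
under [X in _ <= X + _]eq_bigr => x _ do rewrite big_nat_recr //=.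
rewrite [X in _ <= X + _]big_split /= -addrA.
apply: lerD.
  by apply: IH => x y le_xN le_yN; apply: G_ge0; exact: leqW.
apply: lerD.
  apply: ler_term_sum_nat => // x lt_xN; apply: G_ge0 => //; exact: ltnW.
by apply: ler_term_sum_nat => // y lt_yN; apply: G_ge0.
Qed.
End SumInequalities.

Section CutMasses.
Variables (R : realFieldType) (n : nat) (p : nat -> R).
Hypothesis p_ge0 : forall k, 0 <= p k.

Definition mass_le (i : nat) : R := \sum_(0 <= k < n | (k <= i)%N) p k.
Definition mass_ge (i : nat) : R := \sum_(0 <= k < n | (i <= k)%N) p k.

Lemma mass_le_ge_succ (i : nat) : mass_le i + mass_ge i.+1 = \sum_(0 <= k < n) p k.
Proof.
rewrite [RHS](bigID (fun k => (k <= i)%N)) /=; congr (_ + _).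
by apply: eq_bigl => k; rewrite ltnNge.
Qed.

Lemma mass_le_homo (i j : nat) : (i <= j)%N -> mass_le i <= mass_le j.
Proof. by move=> le_ij; apply: ler_sum_subpred => // k /leq_trans; apply. Qed.

Lemma mass_ge_homo (i j : nat) : (i <= j)%N -> mass_ge j <= mass_ge i.
Proof. by move=> le_ij; apply: ler_sum_subpred => // k; apply: leq_trans. Qed.

Lemma sum_pairs_across_cuts (N : nat) (g : nat -> R) :
  \sum_(0 <= x < n) \sum_(0 <= y < n) p x * p y * \sum_(0 <= i < N | (x <= i < y)%N) g i =
  \sum_(0 <= i < N) g i * (mass_le i * mass_ge i.+1).
Proof.
under eq_bigr => x _ do under eq_bigr => y _ do rewrite big_mkcond mulr_sumr.
under eq_bigr => x _ do rewrite exchange_big /=.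
rewrite exchange_big /=; apply: eq_bigr => i _.
rewrite /mass_le /mass_ge (big_mkcond (fun k => k <= i)%N) (big_mkcond (fun k => i < k)%N).
rewrite big_distrl mulr_sumr; apply: eq_bigr => x _.
rewrite big_distrr mulr_sumr; apply: eq_bigr => y _.
by case: (x <= i)%N; case: (i < y)%N => /=; ring.
Qed.
End CutMasses.

Section PathPoincare.
Variables (R : realFieldType) (N : nat) (p : nat -> R) (q : nat -> nat -> R).
Hypotheses (p_ge0 : forall k, 0 <= p k) (p_sum1 : \sum_(0 <= k < N.+1) p k = 1).

Lemma variance_le_cut_sum (f : nat -> R) :
  \sum_(0 <= x < N.+1) p x * (f x - \sum_(0 <= k < N.+1) p k * f k) ^+ 2 <=
  N%:R * \sum_(0 <= i < N) (f i.+1 - f i) ^+ 2 * (mass_le N.+1 p i * mass_ge N.+1 p i.+1).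
Proof.
set steps := fun x y => \sum_(0 <= i < N | (x <= i < y)%N) (f i.+1 - f i) ^+ 2.
have pairs_le : \sum_(0 <= x < N.+1) \sum_(0 <= y < N.+1) p x * p y * (f x - f y) ^+ 2 <=
    \sum_(0 <= x < N.+1) \sum_(0 <= y < N.+1) p x * p y * (N%:R * (steps x y + steps y x)).
  apply: ler_sum_nat => x /= lt_xN; apply: ler_sum_nat => y /= lt_yN.
  by rewrite ler_wpM2l ?mulr_ge0 ?sqr_subr_le_steps_sym.
have pairs_sym :
    \sum_(0 <= x < N.+1) \sum_(0 <= y < N.+1) p x * p y * (N%:R * (steps x y + steps y x)) =
    2 * (N%:R * \sum_(0 <= x < N.+1) \sum_(0 <= y < N.+1) p x * p y * steps x y).
  have split_sym x y : p x * p y * (N%:R * (steps x y + steps y x)) =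
      N%:R * (p x * p y * steps x y) + N%:R * (p y * p x * steps y x) by ring.
  under eq_bigr => x _ do under eq_bigr => y _ do rewrite split_sym.
  under eq_bigr => x _ do rewrite big_split /=.
  rewrite big_split /= [X in _ + X]exchange_big /=.
  have -> : \sum_(0 <= x < N.+1) \sum_(0 <= y < N.+1) N%:R * (p x * p y * steps x y) =
            N%:R * \sum_(0 <= x < N.+1) \sum_(0 <= y < N.+1) p x * p y * steps x y.
    by rewrite mulr_sumr; apply: eq_bigr => x _; rewrite mulr_sumr.
  ring.
rewrite sum_pairs_sqr_subr // in pairs_le.
rewrite pairs_sym sum_pairs_across_cuts in pairs_le.
lra.
Qed.

Lemma cut_mass_le_edge_flow (alpha beta : R) (i : nat) :
  0 <= alpha -> p i * q i i.+1 = p i.+1 * q i.+1 i ->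
  alpha <= Num.max (q i.+1 i) (q i i.+1) ->
  Num.min (mass_le N.+1 p i) (mass_ge N.+1 p i) <= beta * p i ->
  Num.min (mass_le N.+1 p i.+1) (mass_ge N.+1 p i.+1) <= beta * p i.+1 ->
  alpha * (mass_le N.+1 p i * mass_ge N.+1 p i.+1) <= beta * (p i.+1 * q i.+1 i).
Proof.
move=> alpha_ge0 rev_i q_ge_alpha cut_i cut_Si.
set A := mass_le N.+1 p i; set B := mass_ge N.+1 p i.+1.
have A_ge0 : 0 <= A by apply: sumr_ge0.
have B_ge0 : 0 <= B by apply: sumr_ge0.
have AB_sum1 : A + B = 1 by rewrite mass_le_ge_succ.
have AB_ge0 : 0 <= A * B by exact: mulr_ge0.
have AB_le_min : A * B <= Num.min A B by rewrite le_min; apply/andP; split; nra.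
have AB_le_i : A * B <= beta * p i.
  apply: le_trans AB_le_min (le_trans _ cut_i).
  by apply: le_min2 => //; exact: mass_ge_homo.
have AB_le_Si : A * B <= beta * p i.+1.
  apply: le_trans AB_le_min (le_trans _ cut_Si).
  by apply: le_min2 => //; exact: mass_le_homo.
move: q_ge_alpha; rewrite le_max => /orP[q_down | q_up].
  have -> : beta * (p i.+1 * q i.+1 i) = q i.+1 i * (beta * p i.+1) by ring.
  exact: ler_pM.
have -> : beta * (p i.+1 * q i.+1 i) = q i i.+1 * (beta * p i) by rewrite -rev_i; ring.
exact: ler_pM.
Qed.

Lemma adjacent_flow_le_dirichlet (f : nat -> R) :
  (forall x y, (x <= N)%N -> (y <= N)%N -> x != y -> 0 <= q x y) ->
  (forall i, p i * q i i.+1 = p i.+1 * q i.+1 i) ->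
  \sum_(0 <= i < N) p i.+1 * q i.+1 i * (f i.+1 - f i) ^+ 2 <=
  2^-1 * \sum_(0 <= x < N.+1) \sum_(0 <= y < N.+1) p x * q x y * (f x - f y) ^+ 2.
Proof.
move=> q_ge0 rev_adj.
rewrite ler_pdivlMl // mulr_sumr.
apply: le_trans (sum_pairs_ge_adjacent _) => [|x y le_xN le_yN].
  apply: ler_sum_nat => i _; rewrite rev_adj -opprB sqrrN; lra.
have [->|neq_xy] := eqVneq x y; first by rewrite subrr expr0n mulr0.
by rewrite mulr_ge0 ?sqr_ge0 ?mulr_ge0 ?q_ge0.
Qed.

Lemma path_poincare (f : nat -> R) (alpha beta : R) :
  0 <= alpha -> 0 <= beta ->
  (forall x y, (x <= N)%N -> (y <= N)%N -> x != y -> 0 <= q x y) ->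
  (forall i, p i * q i i.+1 = p i.+1 * q i.+1 i) ->
  (forall i, (i < N)%N -> alpha <= Num.max (q i.+1 i) (q i i.+1)) ->
  (forall i, (i <= N)%N -> Num.min (mass_le N.+1 p i) (mass_ge N.+1 p i) <= beta * p i) ->
  alpha * \sum_(0 <= x < N.+1) p x * (f x - \sum_(0 <= k < N.+1) p k * f k) ^+ 2 <=
  beta * N%:R *
    (2^-1 * \sum_(0 <= x < N.+1) \sum_(0 <= y < N.+1) p x * q x y * (f x - f y) ^+ 2).
Proof.
move=> alpha_ge0 beta_ge0 q_ge0 rev_adj q_alpha cut_beta.
have var_le := variance_le_cut_sum f.
have flow_le := adjacent_flow_le_dirichlet f q_ge0 rev_adj.
have cut_le :
    alpha * \sum_(0 <= i < N) (f i.+1 - f i) ^+ 2 * (mass_le N.+1 p i * mass_ge N.+1 p i.+1)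
    <= beta * \sum_(0 <= i < N) p i.+1 * q i.+1 i * (f i.+1 - f i) ^+ 2.
  rewrite !mulr_sumr; apply: ler_sum_nat => i /= lt_iN.
  have := cut_mass_le_edge_flow alpha_ge0 (rev_adj i) (q_alpha i lt_iN)
    (cut_beta i (ltnW lt_iN)) (cut_beta i.+1 lt_iN).
  have := sqr_ge0 (f i.+1 - f i); nra.
have N_ge0 : 0 <= N%:R :> R by exact: ler0n.
apply: le_trans (ler_wpM2l alpha_ge0 var_le) _.
have := ler_wpM2l N_ge0 cut_le; have := ler_wpM2l (mulr_ge0 beta_ge0 N_ge0) flow_le.
nra.
Qed.
End PathPoincare.

Lemma sum_ord_inord (V : nmodType) (n : nat) (P : pred nat) (F : 'I_n.+1 -> V) :
  \sum_(i < n.+1 | P i) F i = \sum_(0 <= k < n.+1 | P k) F (inord k).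
Proof. by rewrite big_mkord; apply: eq_bigr => i _; rewrite inord_val. Qed.

Section ReversibleChain.
Variables (R : realType) (L : nat) (p : 'I_L.+1 -> R) (q : 'I_L.+1 -> 'I_L.+1 -> R).

Lemma variance_ge0 (f : 'I_L.+1 -> R) : (forall x, 0 <= p x) -> 0 <= variance p f.
Proof. by move=> p_ge0; apply: sumr_ge0 => x _; rewrite mulr_ge0 ?sqr_ge0. Qed.

Lemma variance_indicator0_neq0 :
  (0 < L)%N -> (forall x, 0 < p x) -> variance p (fun x => (x == ord0)%:R) != 0.
Proof.
move=> L_gt0 p_gt0; set f := fun x : 'I_L.+1 => (x == ord0)%:R : R.
have E_gt0 : 0 < expect p f.
  rewrite /expect (bigD1 ord0) //= /f eqxx mulr1; apply: ltr_wpDr => //.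
  by apply: sumr_ge0 => x _; rewrite mulr_ge0 ?ler0n ?ltW.
rewrite gt_eqF //= /variance (bigD1 (inord 1)) //=.
have -> : f (inord 1) = 0 by rewrite /f -val_eqE /= inordK // ltnS.
rewrite sub0r sqrrN; apply: ltr_wpDr.
  by apply: sumr_ge0 => x _; rewrite mulr_ge0 ?sqr_ge0 ?ltW.
by rewrite mulr_gt0 // exprn_gt0.
Qed.

Lemma le_spectral_gap (c : R) :
  (forall x, 0 <= p x) -> (exists f, variance p f != 0) ->
  (forall f, c * variance p f <= dirichlet p q f) -> c <= spectral_gap p q.
Proof.
move=> p_ge0 [f0 var_f0] c_le; apply: lb_le_inf.
  by exists (dirichlet p q f0 / variance p f0), f0.
move=> _ [f [var_f ->]].
by rewrite ler_pdivlMr ?c_le // lt_def var_f variance_ge0.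
Qed.

Lemma chain_poincare (alpha beta : R) (f : 'I_L.+1 -> R) :
  is_prob p -> is_rate q -> reversible p q -> 0 <= alpha -> 0 <= beta ->
  (forall n : nat, (1 <= n <= L)%N ->
     alpha <= Num.max (q (inord n) (inord n.-1)) (q (inord n.-1) (inord n))) ->
  (forall n : 'I_L.+1,
     Num.min (\sum_(m < L.+1 | (m <= n)%N) p m) (\sum_(m < L.+1 | (n <= m)%N) p m)
     <= beta * p n) ->
  alpha * variance p f <= beta * L%:R * dirichlet p q f.
Proof.
move=> [p_gt0 p_sum1] q_ge0 pq_rev alpha_ge0 beta_ge0 q_alpha cut_beta.
rewrite /variance /expect /dirichlet !(sum_ord_inord xpredT).
under [X in _ <= _ * (_ * X)]eq_bigr do rewrite (sum_ord_inord xpredT).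
apply: path_poincare => //.
- by move=> k; exact: ltW.
- by rewrite -(sum_ord_inord xpredT).
- move=> x y le_xL le_yL neq_xy; apply: q_ge0.
  by apply: contra neq_xy => /eqP/(congr1 val); rewrite /= !inordK // => ->.
- by move=> i lt_iL; apply: (q_alpha i.+1).
- move=> i le_iL; have := cut_beta (inord i).
  by rewrite inordK // (sum_ord_inord (fun k => k <= i)%N) (sum_ord_inord (leq i)).
Qed.

End ReversibleChain.

Theorem lemma4p8 (R : realType) (L : nat) (hL : (1 <= L)%N)
  (p : 'I_L.+1 -> R) (q : 'I_L.+1 -> 'I_L.+1 -> R) (alpha beta : R)
  (hp : is_prob p) (hq : is_rate q) (hrev : reversible p q)
  (halpha : 0 < alpha) (hbeta : 0 < beta)
  (ha : forall n : nat, (1 <= n <= L)%N ->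
          alpha <= Num.max (q (inord n) (inord n.-1)) (q (inord n.-1) (inord n)))
  (hb : forall n : 'I_L.+1,
          Num.min (\sum_(m < L.+1 | (m <= n)%N) p m) (\sum_(m < L.+1 | (n <= m)%N) p m)
          <= beta * p n) :
  0 < spectral_gap p q /\ relaxation_time p q <= beta * L%:R / alpha.
Proof.
have [p_gt0 _] := hp.
have scale_gt0 : 0 < beta * L%:R by rewrite mulr_gt0 ?ltr0n.
have gap_ge : alpha / (beta * L%:R) <= spectral_gap p q.
  apply: le_spectral_gap => [x||f]; first exact: ltW.
    by exists (fun x => (x == ord0)%:R); exact: variance_indicator0_neq0.
  rewrite mulrAC ler_pdivrMr //.
  have := chain_poincare f hp hq hrev (ltW halpha) (ltW hbeta) ha hb; lra.
have gap_gt0 : 0 < spectral_gap p q by apply: lt_le_trans gap_ge; rewrite divr_gt0.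
split => //; rewrite /relaxation_time -invf_div.
by rewrite lef_pV2 ?posrE ?divr_gt0.
Qed.
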